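(* Let $y=Dx+w$ as in the context with $x\ne0$, and suppose that $\max_{1\le j\le M}\|D[j]^*w\|_2<\tau$ for some $\tau>0$. If $$(1-(d-1)\nu)x_{\max}>2\tau+(2s-1)d\mu_Bx_{\max},$$ then $\max_{j\in S}\|D[j]^*y\|_2>\max_{j\notin S}\|D[j]^*y\|_2$. If instead the stronger condition $$(1-(d-1)\nu)x_{\min}>2\tau+(2s-1)d\mu_Bx_{\max}$$ holds, then $\min_{j\in S}\|D[j]^*y\|_2>\max_{j\notin S}\|D[j]^*y\|_2$.
   Context: Setting: $N=Md$. For $v\in\mathbb{C}^N$, $v[i]=(v_{(i-1)d+1},\dots,v_{id})^T$ is its $i$-th block ($1\le i\le M$); for a matrix $A$ with $N$ columns, $A[i]$ is the submatrix of columns $(i-1)d+1,\dots,id$. The block support is $\mathrm{supp}(v)=\{i:v[i]\ne0\}$. $x\in\mathbb{C}^N$, $S=\mathrm{supp}(x)$, $s=|S|$, $x_{\max}=\max_{i\in S}\|x[i]\|_2$, $x_{\min}=\min_{i\in S}\|x[i]\|_2$. $D\in\mathbb{C}^{L\times N}$ has columns $d_1,\dots,d_N$ with $\|d_i\|_2=1$; $w\in\mathbb{C}^L$ arbitrary. Block coherence $\mu_B=\max_{i\ne j}\frac1d\|D[i]^*D[j]\|$ (spectral norm); sub-coherence $\nu=\max_{1\le\ell\le M}\max_{(\ell-1)d+1\le i\ne j\le\ell d}|d_i^*d_j|$. *)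

(* Complex numbers are modelled by an arbitrary
   numClosedFieldType C (e.g. algC). *)
From HB Require Import structures.
From mathcomp Require Import all_boot all_order all_algebra.
Set Implicit Arguments. Unset Strict Implicit. Unset Printing Implicit Defensive.
Import Order.TTheory GRing.Theory Num.Theory.
Local Open Scope ring_scope.

Section BlockDefs.
Variable C : numClosedFieldType.

Definition norm2 (n : nat) (v : 'cV[C]_n) : C :=
  sqrtC (\sum_(k < n) `|v k 0| ^+ 2).

Definition adjmx (m n : nat) (A : 'M[C]_(m, n)) : 'M[C]_(n, m) :=
  (map_mx Num.conj A)^T.

Definition is_spec_norm (m n : nat) (A : 'M[C]_(m, n)) (c : C) : Prop :=
  (forall v : 'cV[C]_n, norm2 (A *m v) <= c * norm2 v) /\
  (forall c' : C, (forall v : 'cV[C]_n, norm2 (A *m v) <= c' * norm2 v) -> c <= c').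

(* 0-based block indexing: entry k (< d) of block i (< M) is index i*d+k *)
Lemma blk_index_lt (M d : nat) (i : 'I_M) (k : 'I_d) : (i * d + k < M * d)%N.
Proof.
case: i => i /= Hi; case: k => k /= Hk.
have H1 : (i * d + k < i * d + d)%N by rewrite ltn_add2l.
apply: (leq_trans H1). by rewrite -mulSnr leq_mul2r Hi orbT.
Qed.

Definition blk_index (M d : nat) (i : 'I_M) (k : 'I_d) : 'I_(M * d) :=
  Ordinal (blk_index_lt i k).

Definition vblk (M d : nat) (v : 'cV[C]_(M * d)) (i : 'I_M) : 'cV[C]_d :=
  \col_(k < d) v (blk_index i k) 0.

Definition mblk (L M d : nat) (A : 'M[C]_(L, M * d)) (i : 'I_M) : 'M[C]_(L, d) :=
  \matrix_(r < L, k < d) A r (blk_index i k).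

Definition bsupp (M d : nat) (v : 'cV[C]_(M * d)) : {set 'I_M} :=
  [set i | vblk v i != 0].

(* max / min of real values F i over a finite set A; max over the empty set
   is 0, and the min uses the max as neutral element, so that for nonempty A
   it is the genuine minimum. *)
Definition setmax (I : finType) (A : {set I}) (F : I -> C) : C :=
  \big[Num.max/0]_(i in A) F i.
Definition setmin (I : finType) (A : {set I}) (F : I -> C) : C :=
  \big[Num.min/setmax A F]_(i in A) F i.

Definition xmax (M d : nat) (x : 'cV[C]_(M * d)) : C :=
  setmax (bsupp x) (fun i => norm2 (vblk x i)).
Definition xmin (M d : nat) (x : 'cV[C]_(M * d)) : C :=
  setmin (bsupp x) (fun i => norm2 (vblk x i)).

Definition is_block_coherence (L M d : nat) (A : 'M[C]_(L, M * d)) (mu : C) : Prop :=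
  exists2 f : 'I_M -> 'I_M -> C,
    (forall i j, i != j -> is_spec_norm (adjmx (mblk A i) *m mblk A j) (f i j)) &
    mu = \big[Num.max/0]_(i < M) \big[Num.max/0]_(j < M | i != j) (f i j / d%:R).

Definition subcoherence (L M d : nat) (A : 'M[C]_(L, M * d)) : C :=
  \big[Num.max/0]_(l < M) \big[Num.max/0]_(a < d) \big[Num.max/0]_(b < d | a != b)
    `|(adjmx (col (blk_index l a) A) *m col (blk_index l b) A) 0 0|.

End BlockDefs.

(* For j in the block support S, D[j]^* y splits into the Gram term
   D[j]^* D[j] x[j], the cross terms D[j]^* D[i] x[i] (i in S, i <> j) and the
   noise D[j]^* w.  The Gram block has unit diagonal and off-diagonal entries of
   modulus at most nu, so it is the identity plus a matrix of norm at most
   (d-1) nu, giving ||D[j]^* D[j] x[j]|| >= (1 - (d-1) nu) ||x[j]||; each cross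
   term has norm at most d mu_B x_max by definition of the block coherence.  For
   j outside S every term of D x is a cross term.  So the correlation is at least
   (1 - (d-1) nu) ||x[j]|| - (s-1) d mu_B x_max - tau on S and at most
   s d mu_B x_max + tau off S, and each hypothesis says that the lower bound
   (at a block attaining x_max, resp. at every block of S) beats the upper one. *)

From HB Require Import structures.
From mathcomp Require Import all_boot all_order all_algebra ring.
Import Order.TTheory GRing.Theory Num.Theory.
Set Implicit Arguments. Unset Strict Implicit. Unset Printing Implicit Defensive.
Local Open Scope ring_scope.

Section NonnegBigMax.
Variables (R : numDomainType) (I : finType) (P : pred I) (F : I -> R).
Hypothesis F_ge0 : forall i, P i -> 0 <= F i.

Lemma bigmax_ge0 : 0 <= \big[Num.max/0]_(i | P i) F i.
Proof.
elim/big_ind: _ => [//| a b | i /F_ge0 //].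
by rewrite maxEle; case: ifP.
Qed.

Let F_real i : P i -> F i \is Num.real.
Proof. by move/F_ge0/ger0_real. Qed.

Lemma le_bigmax i : P i -> F i <= \big[Num.max/0]_(j | P j) F j.
Proof.
move=> Pi; have : i \in index_enum I by rewrite mem_index_enum.
elim: (index_enum I) => //= j r IH; rewrite inE big_cons.
have rmax : \big[Num.max/0]_(k <- r | P k) F k \is Num.real by exact: bigmax_real.
case/predU1P => [<-|/IH ir].
  by rewrite Pi comparable_le_max ?lexx ?real_comparable ?F_real.
by case: ifP => // Pj; rewrite comparable_le_max ?ir ?orbT ?real_comparable ?F_real.
Qed.

Lemma bigmax_attained i0 : P i0 ->
  exists2 i, P i & \big[Num.max/0]_(j | P j) F j = F i.
Proof.
move=> Pi0; set mx := \big[Num.max/0]_(j | P j) F j.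
have [mx0|//] : mx = 0 \/ exists2 i, P i & mx = F i.
  elim/big_ind: mx => [|a b|i Pi]; [by left| |by right; exists i].
  by rewrite maxEle; case: ifP.
exists i0 => //; apply/eqP; rewrite eq_le {1}mx0 F_ge0 //=; exact: le_bigmax.
Qed.

Lemma bigmin_le (b : R) i : 0 <= b -> P i -> \big[Num.min/b]_(j | P j) F j <= F i.
Proof.
move=> b0 Pi; have : i \in index_enum I by rewrite mem_index_enum.
elim: (index_enum I) => //= j r IH; rewrite inE big_cons.
have rmin : \big[Num.min/b]_(k <- r | P k) F k \is Num.real.
  by apply: bigmin_real; rewrite ?ger0_real.
case/predU1P => [<-|/IH ir].
  by rewrite Pi comparable_ge_min ?lexx ?real_comparable ?F_real.
by case: ifP => // Pj; rewrite comparable_ge_min ?ir ?orbT ?real_comparable ?F_real.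
Qed.

End NonnegBigMax.

Lemma lt_bigmin (R : numDomainType) (I : finType) (P : pred I) (F : I -> R) (b B : R) :
  B < b -> (forall i, P i -> B < F i) -> B < \big[Num.min/b]_(i | P i) F i.
Proof. by move=> Bb BF; elim/big_ind: _ => // u v; rewrite minEle; case: ifP. Qed.

Lemma cauchy_schwarz (R : numDomainType) (I : finType) (P : pred I) (a b : I -> R) :
  (forall i, a i \is Num.real) -> (forall i, b i \is Num.real) ->
  (\sum_(i | P i) a i * b i) ^+ 2 <=
    (\sum_(i | P i) a i ^+ 2) * (\sum_(i | P i) b i ^+ 2).
Proof.
move=> ra rb; rewrite expr2 !mulr_suml.
under eq_bigr do rewrite mulr_sumr; under [X in _ <= X]eq_bigr do rewrite mulr_sumr.
rewrite -(ler_pMn2r (n := 2)) // !mulr2n [X in _ <= _ + X]exchange_big /= -!big_split /=.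
apply: ler_sum => i Pi; rewrite -!big_split /=; apply: ler_sum => j Pj.
have [+ _] := real_leif_mean_square_scaled (rpredM (ra i) (rb j)) (rpredM (ra j) (rb i)).
by rewrite !exprMn mulrACA (mulrC (b j)) mulrACA mulr2n.
Qed.

Lemma sqr_sum_le_card (R : numDomainType) (I : finType) (P : pred I) (f : I -> R) :
  (forall i, f i \is Num.real) ->
  (\sum_(i | P i) f i) ^+ 2 <= #|P|%:R * \sum_(i | P i) f i ^+ 2.
Proof.
move=> rf; have := cauchy_schwarz P rf (fun _ => real1 R).
under eq_bigr do rewrite mulr1; under [X in _ <= _ * X]eq_bigr do rewrite expr1n.
by rewrite sumr_const mulrC.
Qed.

Lemma separation_margin (R : numDomainType) (K s m T tau : R) :
  T < tau -> 2 * tau + (2 * s - 1) * m < K -> s * m + T < K - (s - 1) * m - T.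
Proof.
move=> T_lt margin; rewrite !ltrBrDr; apply: le_lt_trans margin.
have -> : s * m + T + T + (s - 1) * m = 2 * T + (2 * s - 1) * m by ring.
by rewrite lerD2r ler_pM2l ?ltW ?ltr0n.
Qed.

Section Norm2.
Variable C : numClosedFieldType.

Lemma norm2_sqr n (v : 'cV[C]_n) : norm2 v ^+ 2 = \sum_k `|v k 0| ^+ 2.
Proof. by rewrite sqrtCK. Qed.

Lemma norm2_ge0 n (v : 'cV[C]_n) : 0 <= norm2 v.
Proof. by rewrite sqrtC_ge0 sumr_ge0 // => k _; rewrite exprn_ge0. Qed.

Lemma norm2_dim0 n (v : 'cV[C]_n) : n = 0%N -> norm2 v = 0.
Proof. by move=> n0; subst n; rewrite /norm2 big_ord0 sqrtC0. Qed.

Lemma norm2_le n (v : 'cV[C]_n) q :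
  0 <= q -> \sum_k `|v k 0| ^+ 2 <= q ^+ 2 -> norm2 v <= q.
Proof. by move=> q0; rewrite -norm2_sqr ler_pXn2r // nnegrE norm2_ge0. Qed.

Lemma norm2N n (v : 'cV[C]_n) : norm2 (- v) = norm2 v.
Proof. by congr sqrtC; apply: eq_bigr => k _; rewrite mxE normrN. Qed.

Lemma norm2_0 n : norm2 (0 : 'cV[C]_n) = 0.
Proof. by rewrite /norm2 big1 ?sqrtC0 // => k _; rewrite mxE normr0 expr0n. Qed.

Lemma ler_sum_norm2M n (u v : 'cV[C]_n) :
  \sum_k `|u k 0| * `|v k 0| <= norm2 u * norm2 v.
Proof.
rewrite -(@ler_pXn2r _ 2) ?nnegrE ?mulr_ge0 ?norm2_ge0 ?sumr_ge0 // => [|k _].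
  by rewrite exprMn !norm2_sqr; apply: cauchy_schwarz => k; exact: normr_real.
by rewrite mulr_ge0.
Qed.

Lemma ler_norm2D n (u v : 'cV[C]_n) : norm2 (u + v) <= norm2 u + norm2 v.
Proof.
apply: norm2_le; first by rewrite addr_ge0 ?norm2_ge0.
apply: (@le_trans _ _ (\sum_k (`|u k 0| + `|v k 0|) ^+ 2)).
  apply: ler_sum => k _; rewrite mxE ler_pXn2r ?nnegrE ?addr_ge0 ?ler_normD //.
under eq_bigr do rewrite sqrrD mulr2n.
rewrite !big_split /= sqrrD mulr2n !norm2_sqr.
by rewrite lerD2r lerD2l lerD ?ler_sum_norm2M.
Qed.

Lemma lerB_norm2D n (u v : 'cV[C]_n) : norm2 u - norm2 v <= norm2 (u + v).
Proof. by rewrite lerBlDr -{1}(addrK v u) -(norm2N v) ler_norm2D. Qed.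

Lemma ler_norm2_sum n (I : finType) (P : pred I) (F : I -> 'cV[C]_n) :
  norm2 (\sum_(i | P i) F i) <= \sum_(i | P i) norm2 (F i).
Proof.
elim/big_ind2: _ => [|x1 x2 y1 y2 h1 h2|//]; first by rewrite norm2_0.
exact: le_trans (ler_norm2D _ _) (lerD h1 h2).
Qed.

End Norm2.

Section Gram.
Variable C : numClosedFieldType.

Lemma norm2_offdiag_mulmx_le n (E : 'M[C]_n) (nu : C) (v : 'cV[C]_n) :
  0 <= nu -> (forall a, E a a = 0) -> (forall a b, a != b -> `|E a b| <= nu) ->
  norm2 (E *m v) <= (n%:R - 1) * nu * norm2 v.
Proof.
case: n E v => [|n] E v nu0 E_diag E_off; first by rewrite !norm2_dim0 ?mulr0.
rewrite -natr1 addrK; apply: norm2_le; first by rewrite !mulr_ge0 ?ler0n ?norm2_ge0.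
(* Row a of E v is a sum of n terms; Cauchy-Schwarz bounds its square by n times
   the sum of squares, and each |v b|^2 then occurs in exactly n rows. *)
set f := fun b => `|v b 0|.
have row_le a : `|(E *m v) a 0| <= nu * \sum_(b | b != a) f b.
  rewrite mxE (bigD1 a) //= E_diag mul0r add0r mulr_sumr.
  apply: le_trans (ler_norm_sum _ _ _) _; apply: ler_sum => b ba.
  by rewrite normrM ler_wpM2r // E_off // eq_sym.
have row_sqr_le a : (\sum_(b | b != a) f b) ^+ 2 <= n%:R * \sum_(b | b != a) f b ^+ 2.
  have := sqr_sum_le_card (fun b => b != a) (fun b => normr_real (v b 0)).
  by rewrite cardC1 card_ord.
have sum_off a : \sum_(b | b != a) f b ^+ 2 = \sum_b f b ^+ 2 - f a ^+ 2.
  by rewrite [X in _ = X - _](bigD1 a) //= addrC addrK.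
apply: (@le_trans _ _ (\sum_a nu ^+ 2 * (n%:R * \sum_(b | b != a) f b ^+ 2))).
  apply: ler_sum => a _.
  apply: (@le_trans _ _ ((nu * \sum_(b | b != a) f b) ^+ 2)).
    rewrite (@ler_pXn2r _ 2) ?nnegrE ?row_le //.
    by apply/mulr_ge0/sumr_ge0 => // b _; exact: normr_ge0.
  by rewrite exprMn ler_wpM2l ?exprn_ge0 ?row_sqr_le.
rewrite -!mulr_sumr; under eq_bigr do rewrite sum_off.
rewrite sumrB sumr_const card_ord mulrSr addrK -norm2_sqr.
by rewrite le_eqVlt; apply/orP; left; apply/eqP; ring.
Qed.

Lemma gram_entry L n (A : 'M[C]_(L, n)) a b :
  (adjmx A *m A) a b = (adjmx (col a A) *m col b A) 0 0.
Proof. by rewrite !mxE; apply: eq_bigr => r _; rewrite !mxE. Qed.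

Lemma gram_diag L n (A : 'M[C]_(L, n)) a : (adjmx A *m A) a a = norm2 (col a A) ^+ 2.
Proof. by rewrite norm2_sqr mxE; apply: eq_bigr => r _; rewrite !mxE normCK mulrC. Qed.

Lemma gram_mulmx_lb L n (A : 'M[C]_(L, n)) (nu : C) (v : 'cV[C]_n) :
  0 <= nu -> (forall a, norm2 (col a A) = 1) ->
  (forall a b, a != b -> `|(adjmx A *m A) a b| <= nu) ->
  (1 - (n%:R - 1) * nu) * norm2 v <= norm2 (adjmx A *m A *m v).
Proof.
move=> nu0 A_unit A_off; set G := adjmx A *m A.
have G_diag a : G a a = 1 by rewrite gram_diag A_unit expr1n.
move: A_off; rewrite -/G; clearbody G => G_off.
have -> : G *m v = v + (G - 1%:M) *m v by rewrite mulmxBl mul1mx addrC subrK.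
apply: le_trans (lerB_norm2D _ _); rewrite mulrBl mul1r lerD2l lerN2.
apply: norm2_offdiag_mulmx_le => // [a|a b ab]; rewrite !mxE.
  by rewrite eqxx mulr1n G_diag subrr.
by rewrite (negbTE ab) mulr0n subr0 G_off.
Qed.

End Gram.

Section BlockIndex.
Variables M d : nat.

Lemma blk_dim_gt0 (k : 'I_(M * d)) : (0 < d)%N.
Proof. by case: k => k; rewrite lt0n; apply: contraTneq => ->; rewrite muln0. Qed.

Lemma blk_div_lt (k : 'I_(M * d)) : (k %/ d < M)%N.
Proof. by rewrite ltn_divLR ?(blk_dim_gt0 k). Qed.

Lemma blk_mod_lt (k : 'I_(M * d)) : (k %% d < d)%N.
Proof. by rewrite ltn_pmod ?(blk_dim_gt0 k). Qed.

Definition blk_pos (k : 'I_(M * d)) : 'I_M * 'I_d :=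
  (Ordinal (blk_div_lt k), Ordinal (blk_mod_lt k)).

Lemma blk_posK : cancel blk_pos (fun p => blk_index p.1 p.2).
Proof. by move=> k; apply: val_inj; rewrite /= -divn_eq. Qed.

Lemma blk_indexK : cancel (fun p => blk_index p.1 p.2) blk_pos.
Proof.
move=> [i a]; have d_gt0 : (0 < d)%N := leq_ltn_trans (leq0n a) (ltn_ord a).
congr (_, _); apply: val_inj => /=; last by rewrite modnMDl modn_small.
by rewrite divnMDl // divn_small ?addn0.
Qed.

Lemma sum_blk_index (V : nmodType) (F : 'I_(M * d) -> V) :
  \sum_k F k = \sum_(i < M) \sum_(a < d) F (blk_index i a).
Proof.
rewrite pair_big (reindex (fun p : 'I_M * 'I_d => blk_index p.1 p.2)) //.
by exists blk_pos => [p|k] _; rewrite ?blk_indexK ?blk_posK.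
Qed.

End BlockIndex.

Section Blocks.
Variables (C : numClosedFieldType) (L M d : nat) (D : 'M[C]_(L, M * d)).

Lemma mulmx_blocks (x : 'cV[C]_(M * d)) : D *m x = \sum_i mblk D i *m vblk x i.
Proof.
apply/colP => r; rewrite mxE summxE sum_blk_index.
by apply: eq_bigr => i _; rewrite mxE; apply: eq_bigr => a _; rewrite !mxE.
Qed.

Lemma mulmx_blocks_supp (x : 'cV[C]_(M * d)) :
  D *m x = \sum_(i in bsupp x) mblk D i *m vblk x i.
Proof.
rewrite mulmx_blocks (bigID (mem (bsupp x))) /= [X in _ + X]big1 ?addr0 // => i.
by rewrite inE negbK => /eqP ->; rewrite mulmx0.
Qed.

Lemma bsupp_neq0 (x : 'cV[C]_(M * d)) : x != 0 -> bsupp x != set0.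
Proof.
apply: contra_neq => supp0; apply/colP => k; rewrite -(blk_posK k) mxE.
have : (blk_pos k).1 \notin bsupp x by rewrite supp0 inE.
by rewrite inE negbK => /eqP/colP/(_ (blk_pos k).2); rewrite !mxE.
Qed.

Lemma col_mblk j a : col a (mblk D j) = col (blk_index j a) D.
Proof. by apply/colP => r; rewrite !mxE. Qed.

Lemma subcoherence_ge0 : 0 <= subcoherence D.
Proof. by do 3![apply: bigmax_ge0 => ? _]. Qed.

Lemma subcoherence_ge l a b : a != b ->
  `|(adjmx (col (blk_index l a) D) *m col (blk_index l b) D) 0 0| <= subcoherence D.
Proof.
move=> ab.
set e := fun l' a' b' => `|(adjmx (col (blk_index l' a') D) *m col (blk_index l' b') D) 0 0|.
have row_ge0 l' a' : 0 <= \big[Num.max/0]_(b' < d | a' != b') e l' a' b'.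
  by apply: bigmax_ge0 => b' _; apply: normr_ge0.
have blk_ge0 l' : 0 <= \big[Num.max/0]_(a' < d) \big[Num.max/0]_(b' < d | a' != b') e l' a' b'.
  by apply: bigmax_ge0 => a' _; apply: row_ge0.
apply: le_trans (le_bigmax (F := e l a) (fun b' _ => normr_ge0 _) ab) _.
apply: le_trans (le_bigmax (fun a' _ => row_ge0 l a') (isT : true)) _.
exact: (le_bigmax (fun l' _ => blk_ge0 l') (isT : true)).
Qed.

Lemma gram_mblk_lb j (v : 'cV[C]_d) :
  (forall c, norm2 (col c D) = 1) ->
  (1 - (d%:R - 1) * subcoherence D) * norm2 v <=
    norm2 (adjmx (mblk D j) *m mblk D j *m v).
Proof.
move=> D_unit; apply: gram_mulmx_lb (subcoherence_ge0) _ _ => [a|a b ab].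
  by rewrite col_mblk.
by rewrite gram_entry !col_mblk subcoherence_ge.
Qed.

Lemma spec_norm_ge0 m n (A : 'M[C]_(m, n)) c : (0 < n)%N -> is_spec_norm A c -> 0 <= c.
Proof.
move=> n_gt0 [A_le _]; set u : 'cV[C]_n := const_mx 1.
have u_gt0 : 0 < norm2 u.
  rewrite sqrtC_gt0 (eq_bigr (fun=> 1)) => [|k _]; last by rewrite mxE normr1 expr1n.
  by rewrite sumr_const card_ord ltr0n.
by rewrite -(pmulr_lge0 _ u_gt0) (le_trans (norm2_ge0 _) (A_le u)).
Qed.

Lemma block_coherence_term_ge0 (f : 'I_M -> 'I_M -> C) i j :
  (forall i j, i != j -> is_spec_norm (adjmx (mblk D i) *m mblk D j) (f i j)) ->
  i != j -> 0 <= f i j / d%:R.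
Proof.
move=> f_norm ij; have [->|d_gt0] := posnP d; first by rewrite mulr0n invr0 mulr0.
by rewrite divr_ge0 ?ler0n ?(spec_norm_ge0 d_gt0 (f_norm _ _ ij)).
Qed.

Lemma block_coherence_ge0 mu : is_block_coherence D mu -> 0 <= mu.
Proof.
case=> f f_norm ->; apply: bigmax_ge0 => i _; apply: bigmax_ge0 => j.
exact: block_coherence_term_ge0.
Qed.

Lemma block_coherence_mulmx_le mu i j (v : 'cV[C]_d) :
  is_block_coherence D mu -> i != j ->
  norm2 (adjmx (mblk D i) *m mblk D j *m v) <= d%:R * mu * norm2 v.
Proof.
case=> f f_norm mu_def ij; have [d0|d_gt0] := posnP d.
  by rewrite !norm2_dim0 ?mulr0.
apply: le_trans ((f_norm i j ij).1 v) _; rewrite ler_wpM2r ?norm2_ge0 //.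
rewrite mulrC -ler_pdivrMr ?ltr0n // mu_def.
have term_ge0 := block_coherence_term_ge0 f_norm.
apply: le_trans (le_bigmax (term_ge0 i) ij) _.
exact: (le_bigmax (fun i' _ => bigmax_ge0 (term_ge0 i')) (isT : true)).
Qed.

End Blocks.

Section Recovery.
Variables (C : numClosedFieldType) (L M d : nat) (D : 'M[C]_(L, M * d)).
Variables (x : 'cV[C]_(M * d)) (w : 'cV[C]_L) (mu : C).
Hypothesis D_unit : forall c, norm2 (col c D) = 1.
Hypothesis D_coh : is_block_coherence D mu.

Local Notation S := (bsupp x).
Local Notation noise := (setmax [set: 'I_M] (fun j => norm2 (adjmx (mblk D j) *m w))).
Local Notation cross := (d%:R * mu * xmax x).
Local Notation K := (1 - (d%:R - 1) * subcoherence D).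

Lemma norm2_vblk_le_xmax i : i \in S -> norm2 (vblk x i) <= xmax x.
Proof. exact: (le_bigmax (fun i _ => norm2_ge0 (vblk x i))). Qed.

Lemma noise_ge j : norm2 (adjmx (mblk D j) *m w) <= noise.
Proof. exact: (le_bigmax (fun i _ => norm2_ge0 (adjmx (mblk D i) *m w)) (in_setT j)). Qed.

Lemma cross_term_le i j : i \in S -> j != i ->
  norm2 (adjmx (mblk D j) *m mblk D i *m vblk x i) <= cross.
Proof.
move=> iS ji; apply: le_trans (block_coherence_mulmx_le _ D_coh ji) _.
by rewrite ler_wpM2l ?norm2_vblk_le_xmax ?mulr_ge0 ?ler0n ?(block_coherence_ge0 D_coh).
Qed.

Lemma corr_off_support_le j : j \notin S ->
  norm2 (adjmx (mblk D j) *m (D *m x + w)) <= #|S|%:R * cross + noise.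
Proof.
move=> jS; rewrite mulmxDr mulmx_blocks_supp mulmx_sumr.
apply: le_trans (ler_norm2D _ _) (lerD _ (noise_ge j)).
apply: le_trans (ler_norm2_sum _ _) _; rewrite mulr_natl -sumr_const.
by apply: ler_sum => i iS; rewrite mulmxA cross_term_le //; apply: contraNneq jS => ->.
Qed.

Lemma corr_on_support_ge j : j \in S ->
  K * norm2 (vblk x j) - (#|S|%:R - 1) * cross - noise <=
    norm2 (adjmx (mblk D j) *m (D *m x + w)).
Proof.
move=> jS; rewrite -addrA -opprD mulmxDr mulmx_blocks_supp mulmx_sumr (bigD1 j) //=.
rewrite -addrA; apply: le_trans (lerB_norm2D _ _); rewrite mulmxA lerB ?gram_mblk_lb //.
apply: le_trans (ler_norm2D _ _) (lerD _ (noise_ge j)).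
apply: le_trans (ler_norm2_sum _ _) _.
rewrite (cardsD1 j) jS -natr1 addrK mulr_natl -sumr_const.
rewrite [leRHS](eq_bigl (fun i => (i \in S) && (i != j))) => [|i]; last first.
  by rewrite in_setD1 andbC.
by apply: ler_sum => i /andP[iS ij]; rewrite mulmxA cross_term_le // eq_sym.
Qed.

Variable tau : C.
Hypothesis noise_lt : noise < tau.
Hypothesis x_neq0 : x != 0.

Local Notation corr := (fun j => norm2 (adjmx (mblk D j) *m (D *m x + w))).
Local Notation margin := (2 * tau + (2 * #|S|%:R - 1) * d%:R * mu * xmax x).

Lemma xmax_ge0 : 0 <= xmax x.
Proof. exact: bigmax_ge0 (fun i _ => norm2_ge0 (vblk x i)). Qed.

Lemma xmin_le i : i \in S -> xmin x <= norm2 (vblk x i).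
Proof. exact: (bigmin_le (fun i _ => norm2_ge0 (vblk x i)) xmax_ge0). Qed.

Lemma xmin_ge0 : 0 <= xmin x.
Proof. by apply: le_bigmin => [|i _]; rewrite ?xmax_ge0 ?norm2_ge0. Qed.

Lemma off_support_max_le : setmax (~: S) corr <= #|S|%:R * cross + noise.
Proof.
apply: bigmax_le => [|j]; last by rewrite inE; apply: corr_off_support_le.
rewrite addr_ge0 ?mulr_ge0 ?ler0n ?xmax_ge0 ?(block_coherence_ge0 D_coh) //.
exact: bigmax_ge0 (fun j _ => norm2_ge0 (adjmx (mblk D j) *m w)).
Qed.

Lemma on_support_max_gt : margin < K * xmax x -> setmax (~: S) corr < setmax S corr.
Proof.
move=> K_margin; have /set0Pn[j0 j0S] := bsupp_neq0 x_neq0.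
have [j jS xmax_j] := bigmax_attained (fun i _ => norm2_ge0 (vblk x i)) j0S.
apply: le_lt_trans off_support_max_le _.
apply: lt_le_trans (le_bigmax (fun i _ => norm2_ge0 _) jS).
apply: lt_le_trans (corr_on_support_ge jS).
by apply: separation_margin noise_lt _; rewrite -xmax_j !mulrA.
Qed.

Lemma margin_ge0 : 0 <= margin.
Proof.
have noise_ge0 : 0 <= noise.
  exact: bigmax_ge0 (fun j _ => norm2_ge0 (adjmx (mblk D j) *m w)).
have tau_ge0 : 0 <= tau := ltW (le_lt_trans noise_ge0 noise_lt).
have /set0Pn[j0 j0S] := bsupp_neq0 x_neq0.
have card_ge0 : 0 <= 2 * #|S|%:R - 1 :> C.
  by rewrite subr_ge0 -natrM ler1n muln_gt0 card_gt0; apply/set0Pn; exists j0.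
by rewrite addr_ge0 ?mulr_ge0 ?ler0n ?xmax_ge0 ?(block_coherence_ge0 D_coh).
Qed.

Lemma on_support_min_gt : margin < K * xmin x -> setmax (~: S) corr < setmin S corr.
Proof.
move=> K_margin; have /set0Pn[j0 j0S] := bsupp_neq0 x_neq0.
have K_xmin_gt0 : 0 < K * xmin x := le_lt_trans margin_ge0 K_margin.
have xmin_gt0 : 0 < xmin x.
  rewrite lt_def xmin_ge0 andbT.
  by apply: contraTneq K_xmin_gt0 => ->; rewrite mulr0 ltxx.
have K_gt0 : 0 < K by rewrite -(pmulr_lgt0 _ xmin_gt0).
have corr_gt j : j \in S -> #|S|%:R * cross + noise < corr j.
  move=> jS; apply: lt_le_trans (corr_on_support_ge jS).
  apply: separation_margin noise_lt _; rewrite !mulrA.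
  exact: lt_le_trans K_margin (ler_wpM2l (ltW K_gt0) (xmin_le jS)).
apply: le_lt_trans off_support_max_le _.
apply: lt_bigmin => [|j /corr_gt //].
exact: lt_le_trans (corr_gt j0 j0S) (le_bigmax (fun i _ => norm2_ge0 _) j0S).
Qed.

End Recovery.

Unset Implicit Arguments.
Set Strict Implicit.

Theorem lemma2 (C : numClosedFieldType) (L M d : nat)
  (D : 'M[C]_(L, M * d)) (x : 'cV[C]_(M * d)) (w : 'cV[C]_L)
  (tau muB : C) :
  (forall c : 'I_(M * d), norm2 (col c D) = 1) ->
  x != 0 ->
  is_block_coherence D muB ->
  0 < tau ->
  setmax [set: 'I_M] (fun j => norm2 (adjmx (mblk D j) *m w)) < tau ->
  let y := D *m x + w in
  let S := bsupp x in
  let s := #|S| in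
  let nu := subcoherence D in
  ((1 - (d%:R - 1) * nu) * xmax x > 2 * tau + (2 * s%:R - 1) * d%:R * muB * xmax x ->
     setmax S (fun j => norm2 (adjmx (mblk D j) *m y))
       > setmax (~: S) (fun j => norm2 (adjmx (mblk D j) *m y))) /\
  ((1 - (d%:R - 1) * nu) * xmin x > 2 * tau + (2 * s%:R - 1) * d%:R * muB * xmax x ->
     setmin S (fun j => norm2 (adjmx (mblk D j) *m y))
       > setmax (~: S) (fun j => norm2 (adjmx (mblk D j) *m y))).
Proof.
(* [0 < tau] is implied by the noise bound. *)
move=> D_unit x_neq0 D_coh _ noise_lt y S s nu; rewrite {}/y {}/s {}/S {}/nu.
split; [exact: on_support_max_gt | exact: on_support_min_gt].
Qed.
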